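(* A $po$-$\Gamma$-semigroup $M$ is right regular if and only if for every fuzzy subset $f$ of $M$ we have $f\preceq (f\circ f)\circ 1$.
   Context: Let $M$ and $\Gamma$ be nonempty sets with a map $M\times\Gamma\times M\to M$, $(a,\gamma,b)\mapsto a\gamma b$, satisfying $(a\gamma b)\mu c=a\gamma(b\mu c)$ for all $a,b,c\in M$, $\gamma,\mu\in\Gamma$. A $po$-$\Gamma$-semigroup is such an $M$ with a partial order $\le$ such that $a\le b$ implies $a\gamma c\le b\gamma c$ and $c\gamma a\le c\gamma b$ for all $c\in M$, $\gamma\in\Gamma$. For $H\subseteq M$, $(H]=\{t\in M: t\le h \text{ for some } h\in H\}$; $a\Gamma a\Gamma M=\{a\gamma a\mu x: x\in M,\gamma,\mu\in\Gamma\}$. $M$ is right regular if $a\in(a\Gamma a\Gamma M]$ for every $a\in M$. A fuzzy subset of $M$ is a map $M\to[0,1]$; $1$ is the constant fuzzy subset with value $1$. For $c\in M$ let $A_c=\{(y,z)\in M\times M: c\le y\gamma z \text{ for some }\gamma\in\Gamma\}$. $(f\circ g)(c)=\bigvee_{(y,z)\in A_c}\min\{f(y),g(z)\}$ if $A_c\ne\emptyset$, and $0$ otherwise. $f\preceq g$ means $f(c)\le g(c)$ for all $c\in M$. *)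

From HB Require Import structures.
From mathcomp Require Import all_boot all_order all_algebra.
From mathcomp Require Import boolp classical_sets reals.
Set Implicit Arguments. Unset Strict Implicit. Unset Printing Implicit Defensive.
Import Order.TTheory GRing.Theory Num.Theory.
Local Open Scope classical_set_scope.
Local Open Scope ring_scope.

Section PoGamma.
Variables (M G : Type) (op : M -> G -> M -> M) (le : M -> M -> Prop).

Definition po_gamma_semigroup : Prop :=
  [/\ inhabited M, inhabited G,
      (forall a b c (g m : G), op (op a g b) m c = op a g (op b m c)),
      (forall a, le a a) /\
      (forall a b, le a b -> le b a -> a = b) /\
      (forall a b c, le a b -> le b c -> le a c) &
      (forall a b c (g : G), le a b -> le (op a g c) (op b g c) /\ le (op c g a) (op c g b))].

(* a \in (a Gamma a Gamma M] *)
Definition right_regular : Prop :=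
  forall a : M, exists (x : M) (g m : G), le a (op (op a g a) m x).

Variable R : realType.

Definition fuzzy (f : M -> R) : Prop := forall x, 0 <= f x <= 1.

Definition A_set (c : M) : set (M * M) :=
  [set p | exists g : G, le c (op p.1 g p.2)].

Definition fcomp (f g : M -> R) : M -> R := fun c =>
  if pselect (A_set c !=set0) then
    sup [set Order.min (f p.1) (g p.2) | p in A_set c]
  else 0.

Definition fone : M -> R := fun _ => 1.

Definition fle (f g : M -> R) : Prop := forall c, f c <= g c.

End PoGamma.

From Pilot Require Import Defs.
From mathcomp Require Import all_boot all_order all_algebra.
From mathcomp Require Import boolp classical_sets reals.
Import Order.TTheory GRing.Theory Num.Theory.
Local Open Scope classical_set_scope.
Local Open Scope ring_scope.

(* If a <= (a g a) m x, then f a <= (f o f)(a g a) <= ((f o f) o 1)(a), since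
   (a, a) lies in A_(a g a) and (a g a, x) in A_a.  Conversely, testing the
   inequality at a on the characteristic function of {a} makes the composite
   positive, which forces a <= y m z with y <= a g a, hence a <= (a g a) m z. *)

Section FuzzyComposition.
Variables (R : realType) (M G : Type) (op : M -> G -> M -> M) (le : M -> M -> Prop).

Local Notation fcomp := (fcomp op le).
Local Notation A_set := (A_set op le).

Lemma fcomp_ge_min (f g : M -> R) c p :
  (forall t, f t <= 1) -> A_set c p -> Order.min (f p.1) (g p.2) <= fcomp f g c.
Proof.
move=> f_le1 Acp; rewrite /Defs.fcomp.
case: pselect => [?|noA]; last by exfalso; apply: noA; exists p.
apply: ub_le_sup; last by exists p.
by exists 1 => _ [q _ <-]; rewrite ge_min f_le1.
Qed.

Lemma fcomp_gt0 (f g : M -> R) c : 0 < fcomp f g c ->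
  exists2 p, A_set c p & 0 < f p.1 /\ 0 < g p.2.
Proof.
rewrite /Defs.fcomp; case: pselect => [[p0 Ap0] sup_gt0|?]; last by rewrite ltxx.
apply: contrapT => noAp; move: sup_gt0; apply/negP; rewrite -leNgt.
apply: ge_sup; first by exists (Order.min (f p0.1) (g p0.2)), p0.
move=> _ [q Aq <-]; rewrite leNgt lt_min; apply/negP => /andP[fq gq].
by apply: noAp; exists q.
Qed.

Lemma fcomp_le1 (f g : M -> R) c : (forall t, f t <= 1) -> fcomp f g c <= 1.
Proof.
move=> f_le1; rewrite /Defs.fcomp.
case: pselect => [[p0 Ap0]|?]; last exact: ler01.
apply: ge_sup; first by exists (Order.min (f p0.1) (g p0.2)), p0.
by move=> _ [q _ <-]; rewrite ge_min f_le1.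
Qed.

Definition fpoint (a : M) : M -> R := fun t => if pselect (t = a) then 1 else 0.

Lemma fpoint_fuzzy a : fuzzy (fpoint a).
Proof. by move=> t; rewrite /fpoint; case: pselect => ?; rewrite ?lexx ?ler01. Qed.

Lemma fpoint_gt0 a t : 0 < fpoint a t -> t = a.
Proof. by rewrite /fpoint; case: pselect => // ?; rewrite ltxx. Qed.

Lemma fpoint_id a : fpoint a a = 1.
Proof. by rewrite /fpoint; case: pselect. Qed.

Lemma right_regular_fle_fcomp :
  (forall a, le a a) -> right_regular op le ->
  forall f : M -> R, fuzzy f -> fle f (fcomp (fcomp f f) (@fone M R)).
Proof.
move=> le_refl rr f f01 a; have [x [g [m a_le]]] := rr a.
have f_le1 t : f t <= 1 by case/andP: (f01 t).
have fa_le : f a <= fcomp f f (op a g a).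
  rewrite -[f a]minxx (fcomp_ge_min f f (op a g a) (a, a) f_le1) //.
  by exists g.
apply: le_trans (fcomp_ge_min (fcomp f f) (@fone M R) a (op a g a, x) _ _).
- by rewrite /= /fone le_min fa_le f_le1.
- by move=> t; apply: fcomp_le1.
- by exists m.
Qed.

Lemma fle_fcomp_right_regular :
  (forall a b c, le a b -> le b c -> le a c) ->
  (forall a b c (g : G), le a b -> le (op a g c) (op b g c)) ->
  (forall f : M -> R, fuzzy f -> fle f (fcomp (fcomp f f) (@fone M R))) ->
  right_regular op le.
Proof.
move=> leT le_opr fle_f a.
have := fle_f _ (fpoint_fuzzy a) a; rewrite fpoint_id => /(lt_le_trans ltr01).
case/fcomp_gt0 => -[y z] [m a_le] /= [/fcomp_gt0 [[y1 y2] [g y_le] /=]] + _.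
case=> /fpoint_gt0 y1a /fpoint_gt0 y2a; rewrite {}y1a {}y2a in y_le.
by exists z, g, m; apply: leT a_le (le_opr _ _ _ _ y_le).
Qed.

End FuzzyComposition.

Theorem theorem26 (R : realType) (M G : Type) (op : M -> G -> M -> M)
  (le : M -> M -> Prop) (HM : po_gamma_semigroup op le) :
  right_regular op le <->
  (forall f : M -> R, fuzzy f ->
     fle f (fcomp op le (fcomp op le f f) (@fone M R))).
Proof.
case: HM => _ _ _ [le_refl [_ leT]] le_op.
split; first exact: right_regular_fle_fcomp.
apply: fle_fcomp_right_regular => // a b c g ab.
by case: (le_op a b c g ab).
Qed.
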